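(* Let $A$ be a finite set of alternatives with $|A|\ge 3$, let $N=\{1,\dots,n\}$ with $n\ge 2$, and let $\mathbb{D}$ be a minimally rich domain of linear orders over $A$ that is connected with two distinct neighbours. If $f:\mathbb{D}^n\to A$ is unanimous, tops-only and locally strategy-proof, then $f$ satisfies dictatorship.
   Context: A domain is a set $\mathbb{D}$ of linear orders (strict preferences) over $A$; a preference profile is $P=(P_1,\dots,P_n)\in\mathbb{D}^n$. For a linear order $P_i$, $r_k(P_i)$ is its $k$-th ranked alternative. $\mathbb{D}$ is minimally rich if every $a\in A$ is ranked first in some $P_i\in\mathbb{D}$. Two linear orders $P_i,P_i'$ are adjacent ($P_i\sim P_i'$) if $P_i'$ is obtained from $P_i$ by swapping two consecutively ranked alternatives and leaving all other ranks unchanged. A social choice function (scf) is a map $f:\mathbb{D}^n\to A$. It is unanimous if $f(P)=a$ whenever every voter ranks $a$ first. It is locally strategy-proof if there is no voter $i$, profile $P$, and $P_i'\in\mathbb{D}$ with $P_i'\sim P_i$ such that $f(P_i',P_{-i})\,P_i\,f(P_i,P_{-i})$. It is tops-only if $f(P)=f(P')$ whenever $r_1(P_i)=r_1(P_i')$ for all $i$. It satisfies dictatorship if there is a voter $i$ with $f(P)=r_1(P_i)$ for all $P\in\mathbb{D}^n$. A path in $\mathbb{D}$ is a sequence of distinct preferences in $\mathbb{D}$ in which consecutive ones are adjacent; $\mathbb{D}$ is connected if any two of its preferences are joined by a path in $\mathbb{D}$. For $\bar{\mathbb{D}}\subseteq\mathbb{D}$, a neighbour of $\bar{\mathbb{D}}$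 in $\mathbb{D}$ is a $P_i\in\mathbb{D}\setminus\bar{\mathbb{D}}$ adjacent to some element of $\bar{\mathbb{D}}$. Two preferences $P_i,P_i'\in\mathbb{D}$ are top-connected in $\mathbb{D}$ if there is a path from $P_i$ to $P_i'$ in $\mathbb{D}$ all of whose members have the same top-ranked alternative. The top-connected closure $\mathbb{D}^{TCC}(P_i)$ is the set of preferences in $\mathbb{D}$ top-connected to $P_i$, together with $P_i$. $\mathbb{D}$ is connected with two distinct neighbours if (1) $\mathbb{D}$ is connected, and (2) for every $P_i\in\mathbb{D}$ there exist two neighbours $P_i',P_i''$ of $\mathbb{D}^{TCC}(P_i)$ in $\mathbb{D}$ with $r_1(P_i')\ne r_1(P_i'')$. *)

From mathcomp Require Import all_boot.
Set Implicit Arguments. Unset Strict Implicit. Unset Printing Implicit Defensive.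

Section Voting.
Variable A : finType.

(* A preference (candidate linear order) is a ranking: P k is the
   alternative ranked (k+1)-th, i.e. r_{k+1}(P) = P k. *)
Definition pref := {ffun 'I_#|A| -> A}.

Definition linear_order (P : pref) : bool := injectiveb P.

Definition is_top (P : pref) (a : A) : bool :=
  [exists k : 'I_#|A|, (val k == 0) && (P k == a)].

Definition same_top (P Q : pref) : bool :=
  [forall a, is_top P a == is_top Q a].

Definition prefers (P : pref) (a b : A) : bool :=
  [exists k : 'I_#|A|, exists l : 'I_#|A|,
     [&& P k == a, P l == b & k < l]].

Definition adjacent (P Q : pref) : bool :=
  [exists k : 'I_#|A|, exists l : 'I_#|A|,
     [&& val l == (val k).+1, Q k == P l, Q l == P k &
         [forall j, (j != k) && (j != l) ==> (Q j == P j)]]].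

Variable D : {set pref}.

Definition minimally_rich : Prop :=
  forall a : A, exists2 P, P \in D & is_top P a.

Definition is_path (P Q : pref) (s : seq pref) : bool :=
  [&& uniq (P :: s), all (mem D) (P :: s), path adjacent P s & last P s == Q].

Definition connected_dom : Prop :=
  forall P Q, P \in D -> Q \in D -> exists s, is_path P Q s.

Definition top_connected (P Q : pref) : Prop :=
  exists s, is_path P Q s && all (same_top P) (P :: s).

Definition TCC (P : pref) : pref -> Prop :=
  fun Q => Q = P \/ (Q \in D /\ top_connected P Q).

Definition neighbour (S : pref -> Prop) (Q : pref) : Prop :=
  Q \in D /\ ~ S Q /\ exists R, S R /\ adjacent R Q.

Definition connected_two_neighbours : Prop :=
  connected_dom /\
  forall P, P \in D ->
    exists P1 P2, [/\ neighbour (TCC P) P1, neighbour (TCC P) P2 &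
                      ~~ same_top P1 P2].

End Voting.

Section SCF.
Variables (A : finType) (n : nat) (D : {set pref A}).

Definition profile := {ffun 'I_n -> pref A}.
Definition in_domain (P : profile) : Prop := forall i, P i \in D.
Definition update (P : profile) (i : 'I_n) (Q : pref A) : profile :=
  [ffun j => if j == i then Q else P j].

Variable f : profile -> A.

Definition unanimous : Prop :=
  forall P a, in_domain P -> (forall i, is_top (P i) a) -> f P = a.

Definition locally_strategy_proof : Prop :=
  forall P i Q, in_domain P -> Q \in D -> adjacent (P i) Q ->
    ~~ prefers (P i) (f (update P i Q)) (f P).

Definition tops_only : Prop :=
  forall P P', in_domain P -> in_domain P' ->
    (forall i, same_top (P i) (P' i)) -> f P = f P'.

Definition dictatorship : Prop :=
  exists i : 'I_n, forall P, in_domain P -> is_top (P i) (f P).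
End SCF.

(* Since f is tops-only, it is an aggregator of top alternatives. For two
   linear orders in D that differ by swapping their top two alternatives a and
   a', local strategy-proofness in both directions says: when one voter's top
   moves from a to a', the outcome either stays put or moves from a to a'.
   Call a and a' adjacent when such a swap exists in D; the domain conditions
   make this graph on A connected, with two distinct neighbours at each vertex.
   On such a graph every unanimous aggregator with the above property is
   dictatorial. For two voters, a voter who wins on one edge wins on every
   edge, because otherwise some x would veto a whole component of the graph
   minus x, and a neighbour of x inside it would veto a strictly smaller
   component. For n voters, let voter j copy voter i: by induction the merged
   aggregator has a dictator, and if it is i the two-voter case, with the
   other voters fixed, decides between i and j. *)

From mathcomp Require Import all_boot perm zify.
From Stdlib Require Import FunctionalExtensionality.
Set Implicit Arguments. Unset Strict Implicit. Unset Printing Implicit Defensive.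

Lemma connect_ind (T : finType) (e : rel T) (x : T) (P : T -> Prop) :
  P x -> (forall a b, connect e x a -> e a b -> P a -> P b) ->
  forall y, connect e x y -> P y.
Proof.
move=> Px IH y /connectP [p xp ->].
elim/last_ind: p xp => [|p b IHp] //.
rewrite rcons_path last_rcons => /andP [xp eb].
apply: IH eb (IHp xp); exact: path_connect xp _ (mem_last x p).
Qed.

(** * Aggregators tracking the edges of a graph *)

Section EdgeGraph.
Variables (T : finType) (E : rel T).
Hypothesis E_sym : symmetric E.
Hypothesis E_irr : irreflexive E.
Hypothesis E_conn : forall a b, connect E a b.
Hypothesis E_two : forall a, exists b c, [/\ E a b, E a c & b != c].

Definition tracks (x x' u u' : T) := u = u' \/ u = x /\ u' = x'.

Lemma tracks_trans x x' u v w :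
  tracks x x' u v -> tracks x x' v w -> tracks x x' u w.
Proof.
rewrite /tracks => -[->|[-> ->]] [<-|[vx ->]]; by [left | right].
Qed.

Lemma E_neq a b : E a b -> a != b.
Proof. by apply: contraTneq => ->; rewrite E_irr. Qed.

Definition avoid (x : T) : rel T := [rel u w | [&& E u w, u != x & w != x]].

Lemma connect_avoid_neq x a b : connect (avoid x) a b -> a != x -> b != x.
Proof. by move=> + ax; elim/connect_ind => // u w _ /and3P []. Qed.

Lemma connect_avoid1 x a b : E a b -> a != x -> b != x -> connect (avoid x) a b.
Proof. by move=> eab ax bx; apply/connect1/and3P. Qed.

Lemma connect_avoid_other x x' a b : connect (avoid x) a b ->
  (forall c, connect (avoid x) a c -> c != x') -> connect (avoid x') a b.
Proof.
move=> + notx'; elim/connect_ind => // u w au uw a'u.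
apply: connect_trans a'u (connect_avoid1 _ (notx' _ au) _); first by case/and3P: uw.
exact/notx'/(connect_trans au)/connect1.
Qed.

Lemma avoid_last_neighbour x y :
  y != x -> exists2 y1, connect (avoid x) y y1 & E y1 x.
Proof.
move=> yx.
have: forall t, connect E y t ->
    connect (avoid x) y t \/ exists2 y1, connect (avoid x) y y1 & E y1 x.
  apply: connect_ind => [|a b _ eab [ya|]]; [by left | | by right].
  have [b_x | bx] := eqVneq b x; first by subst b; right; exists a.
  by left; apply: connect_trans ya (connect_avoid1 eab (connect_avoid_neq ya yx) bx).
by case/(_ x (E_conn y x)) => // /connect_avoid_neq /(_ yx); rewrite eqxx.
Qed.

Section TwoVoters.
Variable psi : T -> T -> T.
Hypothesis psi_tracks1 : forall y x x', E x x' -> tracks x x' (psi x y) (psi x' y).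
Hypothesis psi_tracks2 : forall x y y', E y y' -> tracks y y' (psi x y) (psi x y').

Lemma psi_diag_first p q : psi p q = p -> psi p p = p.
Proof.
move=> pq; apply/eqP/contraT => pp.
suff: forall t, connect E q t -> psi p t = p.
  by move/(_ p (E_conn q p))/eqP; rewrite (negbTE pp).
apply: connect_ind => // a b _ eab pa.
case: (psi_tracks2 p eab) => [<- // | [ap _]].
have a_p : a = p by rewrite -ap pa.
by subst a; rewrite pa eqxx in pp.
Qed.

Lemma psi_const c : (forall x, psi x x = c) -> forall x y, psi x y = c.
Proof.
move=> diag x y; move: (E_conn y x); elim/connect_ind; first exact: diag.
move=> a b _ eab ac; case: (psi_tracks1 y eab) => [<- // | [ay by_]].
have [<- // | bc] := eqVneq b c.
by move: bc; rewrite -(diag b) (psi_diag_first by_) eqxx.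
Qed.

Hypothesis psi_unan : forall x, psi x x = x.

Lemma psi_edge x y : E x y -> psi x y = x \/ psi x y = y.
Proof. by move=> exy; case: (psi_tracks1 y exy) => [->|[-> _]]; [right | left]. Qed.

Lemma psi_first_avoid a b b' : psi a b = a -> connect (avoid a) b b' -> psi a b' = a.
Proof.
move=> ab; elim/connect_ind => // u w _ /and3P [euw ua _] ua_a.
case: (psi_tracks2 a euw) => [<- // | [ua_u _]].
by move: ua; rewrite -ua_u ua_a eqxx.
Qed.

Lemma psi_second_avoid a b a' : psi a b = b -> connect (avoid b) a a' -> psi a' b = b.
Proof.
move=> ab; elim/connect_ind => // u w _ /and3P [euw ub _] ub_b.
case: (psi_tracks1 b euw) => [<- // | [ub_u _]].
by move: ub; rewrite -ub_u ub_b eqxx.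
Qed.

Definition veto x y := forall b, connect (avoid x) y b -> psi x b = x /\ psi b x = x.

Lemma veto_descent x y : y != x -> veto x y ->
  exists x' y', [/\ y' != x', veto x' y' &
    [set b | connect (avoid x') y' b] \proper [set b | connect (avoid x) y b]].
Proof.
move=> yx vxy.
have [y1 yy1 y1x] := avoid_last_neighbour yx.
have y1_x : y1 != x := connect_avoid_neq yy1 yx.
have [y' y1y' y'x] : exists2 y', E y1 y' & y' != x.
  have [b [c [y1b y1c bc]]] := E_two y1.
  have [b_x | ] := eqVneq b x; last by exists b.
  by exists c; rewrite // -b_x eq_sym.
have y'y1 : y' != y1 by rewrite eq_sym E_neq.
have xy' : x != y' by rewrite eq_sym.
have yy' := connect_trans yy1 (connect_avoid1 y1y' y1_x y'x).
have [xy'_x y'x_x] := vxy _ yy'.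
have [_ y1x_x] := vxy _ yy1.
have y1y'_y1 : psi y1 y' = y1.
  case: (psi_edge y1y') => // /psi_second_avoid y'_wins.
  have := y'_wins _ (connect_avoid1 y1x (E_neq y1y') xy').
  by rewrite xy'_x => /eqP; rewrite (negbTE xy').
have y'y1_y1 : psi y' y1 = y1.
  have y'y1E : E y' y1 by rewrite E_sym.
  case: (psi_edge y'y1E) => // /psi_first_avoid y'_wins.
  have := y'_wins _ (connect_avoid1 y1x (E_neq y1y') xy').
  by rewrite y'x_x => /eqP; rewrite (negbTE xy').
exists y1, y'; split => //.
  by move=> b y'b; rewrite (psi_first_avoid y1y'_y1) ?(psi_second_avoid y'y1_y1).
apply/properP; split.
  apply/subsetP => b; rewrite !inE => /connect_avoid_other y'b.
  apply: (connect_trans yy'); apply: y'b => c /(psi_first_avoid y1y'_y1).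
  by apply: contra_eq_neq => ->; rewrite y1x_x eq_sym.
exists y1; rewrite !inE //.
by apply/negP => /connect_avoid_neq /(_ y'y1); rewrite eqxx.
Qed.

Lemma no_veto x y : y != x -> ~ veto x y.
Proof.
move: {2}#|_| (leqnn #|[set b | connect (avoid x) y b]|) => m.
elim: m x y => [|m IH] x y + yx vxy;
  have [x' [y' [y'x' vx'y' /proper_card lt]]] := veto_descent yx vxy.
  by rewrite leqn0 => /eqP c0; rewrite c0 in lt.
by move=> le; apply: (IH x' y') => //; rewrite -ltnS (leq_trans lt le).
Qed.

Lemma psi_edge_swap x y : E x y -> psi x y = x -> psi y x = y.
Proof.
move=> exy xy_x; have eyx : E y x by rewrite E_sym.
case: (psi_edge eyx) => // yx_x; exfalso.
apply: (no_veto (E_neq eyx)) => b yb.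
by rewrite (psi_first_avoid xy_x) ?(psi_second_avoid yx_x).
Qed.

Lemma psi_edge_first x y z : E x y -> psi x y = x -> E x z -> psi x z = x.
Proof.
move=> exy xy_x exz; have yx_y := psi_edge_swap exy xy_x.
have [-> // | zy] := eqVneq z y.
have yz_y := psi_first_avoid yx_y (connect_avoid1 exz (E_neq exy) zy).
have eyx : E y x by rewrite E_sym.
case: (psi_tracks1 z eyx) => [| [_ //]]; rewrite yz_y => y_xz.
case: (psi_edge exz); rewrite -y_xz => y_eq; first by move: (E_neq exy); rewrite y_eq eqxx.
by move: zy; rewrite y_eq eqxx.
Qed.

Lemma psi_edges_first x0 y0 : E x0 y0 -> psi x0 y0 = x0 ->
  forall x z, E x z -> psi x z = x.
Proof.
move=> ex0y0 x0y0_x0 x; move: (E_conn x0 x); elim/connect_ind.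
  by move=> z; apply: psi_edge_first ex0y0 x0y0_x0.
move=> a b _ eab a_first z ebz.
have eba : E b a by rewrite E_sym.
exact: psi_edge_first eba (psi_edge_swap eab (a_first _ eab)) ebz.
Qed.

Lemma psi_proj1 : (forall x z, E x z -> psi x z = x) -> forall x y, psi x y = x.
Proof.
move=> edges_first x y; move: (E_conn x y); elim/connect_ind => // a b _ eab ax_x.
case: (psi_tracks2 x eab) => [<- // | [xa_a _]].
have a_x : a = x by rewrite -xa_a.
by subst a; apply: edges_first.
Qed.
End TwoVoters.

Lemma two_voter_dictator psi :
  (forall y x x', E x x' -> tracks x x' (psi x y) (psi x' y)) ->
  (forall x y y', E y y' -> tracks y y' (psi x y) (psi x y')) ->
  (forall x, psi x x = x) ->
  (forall x y, psi x y = x) \/ (forall x y, psi x y = y).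
Proof.
move=> tracks1 tracks2 unan.
case: (pickP (@predT T)) => [a _ | T0]; last by left => x; have := T0 x.
have [b [_ [eab _ _]]] := E_two a.
case: (psi_edge tracks1 unan eab) => [ab_a | ab_b].
  have psi_edges := psi_edges_first tracks1 tracks2 unan eab ab_a.
  by left; apply: (psi_proj1 tracks2 unan (@psi_edges)).
pose phi x y := psi y x.
have phi_tracks1 y x x' : E x x' -> tracks x x' (phi x y) (phi x' y) by apply: tracks2.
have phi_tracks2 x y y' : E y y' -> tracks y y' (phi x y) (phi x y') by apply: tracks1.
have eba : E b a by rewrite E_sym.
have phi_edges := psi_edges_first phi_tracks1 phi_tracks2 unan eba ab_b.
by right => x y; apply: (psi_proj1 phi_tracks2 unan (@phi_edges) y x).
Qed.

Section Voters.
Variable I : finType.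

Definition upd (v : I -> T) k a := fun m => if m == k then a else v m.

Lemma updE v k a m : upd v k a m = if m == k then a else v m.
Proof. by []. Qed.

Lemma upd_eq v k a : upd v k a k = a.
Proof. by rewrite updE eqxx. Qed.

Lemma upd_neq v k a m : m != k -> upd v k a m = v m.
Proof. by rewrite updE => /negbTE ->. Qed.

Lemma upd_upd v k a b : upd (upd v k a) k b = upd v k b.
Proof. by apply: functional_extensionality => m; rewrite !updE; case: eqP. Qed.

Lemma upd_comm v k l a b : k != l -> upd (upd v k a) l b = upd (upd v l b) k a.
Proof.
move=> kl; apply: functional_extensionality => m; rewrite !updE.
by case: (eqVneq m l) => [->|//]; rewrite eq_sym (negbTE kl).
Qed.

Lemma upd_id v k : upd v k (v k) = v.
Proof. by apply: functional_extensionality => m; rewrite updE; case: eqP => [->|]. Qed.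

Lemma foldr_upd (v w : I -> T) s m :
  foldr (fun k u => upd u k (w k)) v s m = if m \in s then w m else v m.
Proof. by elim: s => //= k s IHs; rewrite updE in_cons IHs; case: eqP => [->|]. Qed.

Definition follows_edges (g : (I -> T) -> T) :=
  forall v k a a', E a a' -> tracks a a' (g (upd v k a)) (g (upd v k a')).

Section Merge.
Variables (g : (I -> T) -> T) (i j : I).
Hypothesis ij : i != j.
Hypothesis g_follows : follows_edges g.

Definition merge w := g (upd w j (w i)).

Definition slice v x y := g (upd (upd v i x) j y).

Lemma merge_follows_edges : follows_edges merge.
Proof.
move=> w k a a' eaa'; rewrite /merge.
have [-> | kj] := eqVneq k j.
  by left; rewrite !upd_upd !upd_neq.
have [-> | ki] := eqVneq k i.
  rewrite !upd_eq; apply: (@tracks_trans _ _ _ (g (upd (upd w i a') j a))).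
    by rewrite !(upd_comm _ _ _ ij); apply: g_follows.
  exact: g_follows.
by rewrite !upd_neq 1?eq_sym // !(upd_comm _ _ _ kj); apply: g_follows.
Qed.

Lemma slice_tracks1 v y x x' : E x x' -> tracks x x' (slice v x y) (slice v x' y).
Proof. by rewrite /slice !(upd_comm _ _ _ ij); apply: g_follows. Qed.

Lemma slice_tracks2 v x y y' : E y y' -> tracks y y' (slice v x y) (slice v x y').
Proof. exact: g_follows. Qed.

Lemma g_slice v : g v = slice v (v i) (v j).
Proof. by rewrite /slice !upd_id. Qed.

Lemma slice_diag v x : slice v x x = merge (upd v i x).
Proof. by rewrite /merge upd_eq. Qed.

Lemma merge_dictator_other d : d != i -> (forall w, merge w = w d) -> forall v, g v = v d.
Proof.
move=> di merge_d v; rewrite g_slice.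
by apply: (psi_const (slice_tracks1 v) (slice_tracks2 v)) => x; rewrite slice_diag merge_d upd_neq.
Qed.

Hypothesis merge_i : forall w, merge w = w i.

Lemma slice_unan v x : slice v x x = x.
Proof. by rewrite slice_diag merge_i upd_eq. Qed.

Lemma slice_dictator v : (forall x y, slice v x y = x) \/ (forall x y, slice v x y = y).
Proof. exact: two_voter_dictator (slice_tracks1 v) (slice_tracks2 v) (slice_unan v). Qed.

Lemma slice_upd_other v k t x y : k != i -> k != j ->
  slice (upd v k t) x y = g (upd (upd (upd v i x) j y) k t).
Proof. by move=> ki kj; rewrite /slice (upd_comm _ _ _ ki) (upd_comm _ _ _ kj). Qed.

Lemma slice_proj1_upd v k b : (forall x y, slice v x y = x) ->
  forall x y, slice (upd v k b) x y = x.
Proof.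
move=> v_proj1.
have [-> | ki] := eqVneq k i; first by move=> x y; rewrite /slice upd_upd; apply: v_proj1.
have [-> | kj] := eqVneq k j.
  by move=> x y; rewrite /slice -(upd_comm _ _ _ ij) upd_upd; apply: v_proj1.
move: (E_conn (v k) b); elim/connect_ind; first by rewrite upd_id.
move=> t t' _ ett' t_proj1; case: (slice_dictator (upd v k t')) => // t'_proj2.
have := g_follows (upd (upd v i t') j t) k ett'.
rewrite -!slice_upd_other // t_proj1 t'_proj2.
by case=> [| [] //] t't; move: ett'; rewrite t't E_irr.
Qed.

Lemma slice_proj1_all v w : (forall x y, slice v x y = x) -> forall x y, slice w x y = x.
Proof.
move=> v_proj1; have <- : foldr (fun k u => upd u k (w k)) v (enum I) = w.
  by apply: functional_extensionality => m; rewrite foldr_upd mem_enum.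
by elim: (enum I) => //= k s IHs; apply: slice_proj1_upd.
Qed.

Lemma merge_dictator : (forall v, g v = v i) \/ (forall v, g v = v j).
Proof.
case: (pickP (@predT T)) => [a _ | T0]; last by left => v; have := T0 (v i).
case: (slice_dictator (fun _ => a)) => [a_proj1 | a_proj2].
  by left => v; rewrite g_slice (slice_proj1_all v a_proj1).
right => v; rewrite g_slice; case: (slice_dictator v) => // v_proj1.
have [b [_ [ab _ _]]] := E_two a.
have := slice_proj1_all (fun _ => a) v_proj1 a b; rewrite a_proj2 => b_a.
by move: ab; rewrite b_a E_irr.
Qed.
End Merge.

Theorem follows_edges_dictator (S : {set I}) (g : (I -> T) -> T) :
  0 < #|S| -> follows_edges g -> (forall a, g (fun _ => a) = a) ->
  (forall v w, {in S, v =1 w} -> g v = g w) ->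
  exists2 d, d \in S & forall v, g v = v d.
Proof.
move=> S_gt0; have [m] : exists m, #|S| = m.+1 by exists #|S|.-1; rewrite prednK.
elim: m S g {S_gt0} => [|m IH] S g cardS g_follows g_unan g_S.
  have /cards1P [d S_d] : #|S| == 1 by rewrite cardS.
  exists d => [|v]; first by rewrite S_d set11.
  by rewrite -(g_unan (v d)); apply: g_S => k; rewrite S_d inE => /eqP ->.
have /card_gt1P [i [j [iS jS ij]]] : 1 < #|S| by rewrite cardS.
have cardSj : #|S :\ j| = m.+1 by move: cardS; rewrite (cardsD1 j S) jS => -[].
have [|||d] := IH (S :\ j) (merge g i j) cardSj.
- exact: merge_follows_edges.
- by move=> a; rewrite /merge upd_id.
- move=> v w vw; apply: g_S => k kS; rewrite !updE.
  have [_ | kj] := eqVneq k j; apply: vw; rewrite !inE ?kj ?kS //.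
  by rewrite iS andbT.
rewrite !inE => /andP [dj dS] merge_d.
have [d_i | di] := eqVneq d i; last by exists d => //; apply: merge_dictator_other merge_d.
rewrite d_i in merge_d.
by case: (merge_dictator ij g_follows merge_d) => g_dict; [exists i | exists j].
Qed.
End Voters.
End EdgeGraph.

(** * The graph of top alternatives *)

Lemma tperm_inversion n (k l p q : 'I_n) : l = k.+1 :> nat ->
  p < q -> tperm k l q < tperm k l p -> p = k /\ q = l.
Proof.
move=> lk; have neq (u v : 'I_n) : u <> v -> u <> v :> nat by move=> uv /val_inj.
by case: tpermP => [->|->|/neq ? /neq ?]; case: tpermP => [->|->|/neq ? /neq ?]; try lia.
Qed.

Section Preferences.
Variable A : finType.
Implicit Types (P Q R : pref A) (a b x y : A).

Lemma prefersI P (k l : 'I_#|A|) : k < l -> prefers P (P k) (P l).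
Proof. by move=> kl; apply/existsP; exists k; apply/existsP; exists l; rewrite !eqxx. Qed.

Lemma not_prefers_lt P (k l : 'I_#|A|) : k != l -> ~~ prefers P (P l) (P k) -> k < l.
Proof.
move=> kl /(contra (@prefersI P l k)).
by rewrite -leqNgt ltn_neqAle => ->; rewrite andbT.
Qed.

Lemma linear_order_surj P : linear_order P -> forall a, exists k, P k = a.
Proof.
move=> /injectiveP P_inj a.
have /codomP [k ->] : a \in codom P by apply: inj_card_onto; rewrite ?card_ord.
by exists k.
Qed.

Lemma adjacent_sym P Q : adjacent P Q -> adjacent Q P.
Proof.
case/existsP => k /existsP [l /and4P [lk /eqP Qk /eqP Ql /forallP Qm]].
apply/existsP; exists k; apply/existsP; exists l.
rewrite lk Qk Ql !eqxx; apply/forallP => m; apply/implyP => /(implyP (Qm m)).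
by rewrite eq_sym.
Qed.

Lemma adjacent_tperm P Q : adjacent P Q ->
  exists k l : 'I_#|A|, l = k.+1 :> nat /\ forall m, Q m = P (tperm k l m).
Proof.
case/existsP => k /existsP [l /and4P [/eqP lk /eqP Qk /eqP Ql /forallP Qm]].
exists k, l; split => // m.
case: tpermP => [-> | -> | /eqP mk /eqP ml] //.
by apply/eqP/(implyP (Qm m)); rewrite mk ml.
Qed.

Hypothesis A_gt0 : 0 < #|A|.

Definition top_pos : 'I_#|A| := Ordinal A_gt0.

Definition top P := P top_pos.

Lemma is_topE P a : is_top P a = (top P == a).
Proof.
apply/existsP/eqP => [[k /andP [/eqP k0 /eqP <-]] | <-]; last by exists top_pos; rewrite /= eqxx.
by rewrite /top; congr (P _); apply: val_inj.
Qed.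

Lemma is_topP P a : reflect (top P = a) (is_top P a).
Proof. by rewrite is_topE; apply: eqP. Qed.

Lemma same_topE P Q : same_top P Q = (top P == top Q).
Proof.
apply/forallP/eqP => [PQ | PQ a]; last by rewrite !is_topE PQ.
by apply/eqP; rewrite eq_sym -is_topE -(eqP (PQ (top P))) is_topE eqxx.
Qed.

Lemma adjacent_tracks R Q x y : linear_order R -> adjacent R Q -> top R != top Q ->
  ~~ prefers R y x -> ~~ prefers Q x y -> tracks (top R) (top Q) x y.
Proof.
move=> linR RQ topRQ nRyx nQxy; have [<- | xy] := eqVneq x y; [by left | right].
have [k [l [lk Qt]]] := adjacent_tperm RQ.
have [p Rp] := linear_order_surj linR x; have [q Rq] := linear_order_surj linR y.
have pq : p != q by apply: contra_neq xy => p_q; rewrite -Rp -Rq p_q.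
have Qtp : Q (tperm k l p) = x by rewrite Qt tpermK.
have Qtq : Q (tperm k l q) = y by rewrite Qt tpermK.
have lt_pq : p < q by move: nRyx; rewrite -Rp -Rq; apply: not_prefers_lt.
have lt_tqp : tperm k l q < tperm k l p.
  move: nQxy; rewrite -Qtp -Qtq; apply: not_prefers_lt.
  by rewrite (inj_eq perm_inj) eq_sym.
have [p_k q_l] := tperm_inversion lk lt_pq lt_tqp.
have k_top : k = top_pos.
  apply/val_inj/eqP; apply: contraNT topRQ => k0.
  by rewrite /top Qt tpermD // -val_eqE /= ?lk // eq_sym.
by rewrite -Rp -Rq p_k q_l /top Qt -k_top tpermL.
Qed.

Variable D : {set pref A}.

Definition top_adj : rel A := fun a b =>
  [exists R in D, exists Q in D, [&& adjacent R Q, top R == a, top Q == b & a != b]].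

Lemma top_adjI R Q : R \in D -> Q \in D -> adjacent R Q -> top R != top Q ->
  top_adj (top R) (top Q).
Proof.
move=> RD QD RQ RQ_top; apply/existsP; exists R; rewrite RD; apply/existsP; exists Q.
by rewrite QD RQ RQ_top !eqxx.
Qed.

Lemma top_adjP a b : top_adj a b -> exists2 R, R \in D &
  exists2 Q, Q \in D & [/\ adjacent R Q, top R = a, top Q = b & a != b].
Proof.
case/existsP => R /andP [RD /existsP [Q /andP [QD /and4P [RQ /eqP Ra /eqP Qb ab]]]].
by exists R => //; exists Q.
Qed.

Lemma top_adj_sym : symmetric top_adj.
Proof.
apply: symmetric_from_pre => a b /top_adjP [R RD [Q QD [RQ <- <- RQ_top]]].
by apply: top_adjI => //; [apply: adjacent_sym | rewrite eq_sym].
Qed.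

Lemma top_adj_irr : irreflexive top_adj.
Proof. by move=> a; apply/negbTE/negP => /top_adjP [R _ [Q _ [_ _ _]]]; rewrite eqxx. Qed.

Lemma connect_top_adj_path P s : path (@adjacent A) P s -> all (mem D) (P :: s) ->
  connect top_adj (top P) (top (last P s)).
Proof.
elim: s P => [|Q s IHs] P /=; first by rewrite connect0.
case/andP => PQ Qs /and3P [PD QD sD].
apply: connect_trans (IHs Q Qs _); last by rewrite /= QD.
have [-> | PQ_top] := eqVneq (top P) (top Q); first exact: connect0.
exact/connect1/top_adjI.
Qed.

Lemma connect_top_adj : minimally_rich D -> connected_dom D ->
  forall a b, connect top_adj a b.
Proof.
move=> rich conn a b.
have [R RD /is_topP <-] := rich a; have [Q QD /is_topP <-] := rich b.
have [s /and4P [_ sD Rs /eqP <-]] := conn R Q RD QD.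
exact: connect_top_adj_path.
Qed.

Lemma shorten_is_path (a : pred (pref A)) P s : path (@adjacent A) P s ->
  all (mem D) (P :: s) -> all a (P :: s) ->
  exists s', is_path D P (last P s) s' && all a (P :: s').
Proof.
move=> Ps sD sa; case: (shortenP Ps) => s' Ps' uniq_s' sub_s'.
have sub_all (b : pred (pref A)) : all b (P :: s) -> all b (P :: s').
  by case/andP => bP /allP bs; rewrite /= bP; apply/allP => z /sub_s' /bs.
by exists s'; rewrite /is_path uniq_s' Ps' eqxx !sub_all.
Qed.

Lemma neighbour_TCC P Q : P \in D -> neighbour D (TCC D P) Q -> top_adj (top P) (top Q).
Proof.
move=> PD [QD [notTQ [R [TR RQ]]]].
have [s [Ps sD sT R_last]] : exists s, [/\ path (@adjacent A) P s, all (mem D) (P :: s),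
    all (same_top P) (P :: s) & last P s = R].
  case: TR => [-> | [_ [s /andP [/and4P [_ sD Ps /eqP <-] sT]]]]; last by exists s.
  by exists [::]; rewrite /= PD same_topE eqxx.
have RD : R \in D by rewrite -R_last; apply: (allP sD); apply: mem_last.
have R_top : top R = top P.
  by apply/eqP; rewrite eq_sym -same_topE -R_last; apply: (allP sT); apply: mem_last.
have PQ_top : top P != top Q.
  apply/negP => /eqP PQ_top; apply: notTQ; right; split => //.
  have PsQ : path (@adjacent A) P (rcons s Q) by rewrite rcons_path Ps R_last.
  have PsQ_D : all (mem D) (P :: rcons s Q) by rewrite -rcons_cons all_rcons sD andbT.
  have PsQ_T : all (same_top P) (P :: rcons s Q).
    by rewrite -rcons_cons all_rcons same_topE PQ_top eqxx.
  have [s' /andP [s'_path s'T]] := shorten_is_path PsQ PsQ_D PsQ_T.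
  by exists s'; rewrite last_rcons in s'_path; rewrite s'_path.
by rewrite -R_top; apply: top_adjI; rewrite // R_top.
Qed.

Lemma top_adj_two : minimally_rich D -> connected_two_neighbours D ->
  forall a, exists b c, [/\ top_adj a b, top_adj a c & b != c].
Proof.
move=> rich [_ two] a; have [P PD /is_topP <-] := rich a.
have [P1 [P2 [PP1 PP2 P12]]] := two P PD.
by exists (top P1), (top P2); rewrite !neighbour_TCC // -same_topE.
Qed.

Hypothesis D_linear : forall P, P \in D -> linear_order P.
Hypothesis D_rich : minimally_rich D.

Definition pref_with_top a := odflt [ffun _ => a] [pick P in D | top P == a].

Lemma pref_with_topP a : pref_with_top a \in D /\ top (pref_with_top a) = a.
Proof.
rewrite /pref_with_top; case: pickP => [P /andP [PD /eqP] // | no_pref].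
have [P PD /is_topP Pa] := D_rich a.
by move: (no_pref P); rewrite PD Pa eqxx.
Qed.

Section SCF.
Variables (n : nat) (f : profile A n -> A).
Hypothesis f_unan : unanimous D f.
Hypothesis f_tops : tops_only D f.
Hypothesis f_lsp : locally_strategy_proof D f.

Definition pref_profile (t : 'I_n -> A) : profile A n := [ffun i => pref_with_top (t i)].

Definition ftop t := f (pref_profile t).

Lemma pref_profile_domain t : in_domain D (pref_profile t).
Proof. by move=> i; rewrite ffunE; case: (pref_with_topP (t i)). Qed.

Lemma f_ftop (P : profile A n) : in_domain D P -> f P = ftop (fun i => top (P i)).
Proof.
move=> PD; apply: f_tops => // [|i]; first exact: pref_profile_domain.
by rewrite ffunE same_topE (pref_with_topP _).2 eqxx.
Qed.

Lemma ftop_unan a : ftop (fun _ => a) = a.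
Proof.
apply: f_unan => [|i]; first exact: pref_profile_domain.
by rewrite ffunE is_topE (pref_with_topP _).2.
Qed.

Lemma update_eq (P : profile A n) k R : update P k R k = R.
Proof. by rewrite ffunE eqxx. Qed.

Lemma update_update (P : profile A n) k R Q : update (update P k R) k Q = update P k Q.
Proof. by apply/ffunP => i; rewrite !ffunE; case: eqP. Qed.

Lemma in_domain_update (P : profile A n) k R :
  in_domain D P -> R \in D -> in_domain D (update P k R).
Proof. by move=> PD RD i; rewrite ffunE; case: eqP. Qed.

Lemma f_update_pref_profile t k R : R \in D ->
  f (update (pref_profile t) k R) = ftop (upd t k (top R)).
Proof.
move=> RD; rewrite (f_ftop (in_domain_update k (pref_profile_domain t) RD)).
congr ftop; apply: functional_extensionality => i.
by rewrite !ffunE updE; case: eqP => // _; case: (pref_with_topP (t i)).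
Qed.

Lemma lsp_update (P : profile A n) k R Q : in_domain D P -> R \in D -> Q \in D ->
  adjacent R Q -> ~~ prefers R (f (update P k Q)) (f (update P k R)).
Proof.
move=> PD RD QD; have := @f_lsp _ k _ (in_domain_update k PD RD) QD.
by rewrite update_eq update_update.
Qed.

Lemma ftop_follows_edges : follows_edges top_adj ftop.
Proof.
move=> t k a a' /top_adjP [R RD [Q QD [RQ <- <- RQ_top]]].
rewrite -!f_update_pref_profile //.
have t_D := pref_profile_domain t.
apply: (adjacent_tracks (D_linear RD) RQ RQ_top (lsp_update _ t_D RD QD RQ)).
exact: lsp_update _ t_D QD RD (adjacent_sym RQ).
Qed.
End SCF.
End Preferences.

Theorem proposition1 (A : finType) (n : nat) (D : {set pref A})
    (f : profile A n -> A) :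
  3 <= #|A| -> 2 <= n ->
  (forall P, P \in D -> linear_order P) ->
  minimally_rich D -> connected_two_neighbours D ->
  unanimous D f -> tops_only D f -> locally_strategy_proof D f ->
  dictatorship D f.
Proof.
move=> A3 n2 D_linear D_rich D_two f_unan f_tops f_lsp.
have A_gt0 : 0 < #|A| by apply: leq_trans A3.
have top_conn := connect_top_adj A_gt0 D_rich D_two.1.
have top_two := top_adj_two A_gt0 D_rich D_two.
have [||||d _ ftop_d] := follows_edges_dictator (top_adj_sym A_gt0 D)
  (top_adj_irr A_gt0 D) top_conn top_two (S := [set: 'I_n]) (g := ftop A_gt0 D f).
- by rewrite cardsT card_ord; apply: leq_trans n2.
- exact: ftop_follows_edges.
- exact: ftop_unan.
- by move=> v w vw; congr ftop; apply: functional_extensionality => i; apply: vw.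
by exists d => P PD; rewrite (f_ftop A_gt0 D_rich f_tops PD) ftop_d is_topE eqxx.
Qed.
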